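(* Let $q$ be odd with $q\equiv-1\pmod3$, and let $\mu\in\mathbb{F}_q$ be a non-square. Let $L_c$ be the line through $\mathbf{P}(1,0,0,1)$ and $\mathbf{P}(0,0,1,0)$, and $\ell_\mu$ the line through $\mathbf{P}(0,\mu,0,1)$ and $\mathbf{P}(1,0,1,0)$. Then $L_c$ and $\ell_\mu$ belong to the same orbit of $G_q$ if and only if $\mu=-1/3$ and $q\equiv-1\pmod{12}$.
   Context: Points of $\mathrm{PG}(3,q)$ are written $\mathbf{P}(x_0,x_1,x_2,x_3)$ over $\mathbb{F}_q$. The twisted cubic is $\mathscr{C}=\{\mathbf{P}(t^3,t^2,t,1):t\in\mathbb{F}_q\}\cup\{\mathbf{P}(1,0,0,0)\}$ and $G_q$ is the group of projectivities of $\mathrm{PG}(3,q)$ fixing $\mathscr{C}$. Two lines are in the same orbit if an element of $G_q$ maps one onto the other. *)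

From HB Require Import structures.
From mathcomp Require Import all_boot all_order all_algebra all_fingroup all_field.
Set Implicit Arguments. Unset Strict Implicit. Unset Printing Implicit Defensive.
Import GRing.Theory.
Local Open Scope ring_scope.

(* Points of PG(3,q) are represented by nonzero row vectors (x0,x1,x2,x3)
   of 'rV[F]_4, up to nonzero scalars; a projectivity is induced by an
   invertible 4x4 matrix A acting on row vectors by v |-> v *m A. *)

Definition vec4 (F : fieldType) (a b c d : F) : 'rV[F]_4 :=
  \row_(i < 4) nth 0 [:: a; b; c; d] i.

Definition onC (F : fieldType) (v : 'rV[F]_4) : Prop :=
  (exists t c : F, c != 0 /\ v = c *: vec4 (t ^+ 3) (t ^+ 2) t 1)
  \/ (exists c : F, c != 0 /\ v = c *: vec4 1 0 0 0).

Definition inGq (F : fieldType) (A : 'M[F]_4) : Prop :=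
  A \in unitmx /\ forall v : 'rV[F]_4, v != 0 -> (onC v <-> onC (v *m A)).

(* The line through the points P(u) and P(v): row space of the 2x4 matrix. *)
Definition line_mx (F : fieldType) (u v : 'rV[F]_4) : 'M[F]_(2, 4) :=
  col_mx u v.

Definition same_orbit (F : fieldType) (L M : 'M[F]_(2, 4)) : Prop :=
  exists A : 'M[F]_4, inGq A /\ (L *m A == M)%MS.

From HB Require Import structures.
From mathcomp Require Import all_boot all_order all_algebra all_fingroup all_solvable all_field.
From mathcomp Require Import ring zify.
Import GRing.Theory.
Local Open Scope ring_scope.
Set Implicit Arguments. Unset Strict Implicit. Unset Printing Implicit Defensive.

(* Up to a scalar, every element of G_q is the matrix sym3 a b c d through which
   [[a, b], [c, d]] in GL(2, q) acts on the twisted cubic; this is read off from the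
   images of the points of parameter oo, 0, 1, -1, 2, -2.  The matrix sym3 a b c d
   maps L_c into l_mu iff four polynomial equations hold.  The two coming from
   P(0,0,1,0) force (a, b, c, d) = (2 r k, (3 r^2 - 1) k, r d, d) with z = r^2 a root
   of a quadratic; the two coming from P(1,0,0,1) then say d^3 = 2 k^3 (9 r^2 - 1)
   and that z is a root of a cubic.  Reducing the cubic modulo the quadratic shows
   that a common root z <> 0, 1 exists only for mu = -1/3, and then 3 (z + 1)^2 = 4
   makes 3 a square.  As mu = -1/3 is a non-square, -1 is then a non-square, i.e.
   q = 3 mod 4.  Conversely, when q = -1 mod 12 both -1 and -3 are non-squares, so
   3 is a square, one of the two roots z = -1 +- 2 sqrt 3 / 3 (whose product is the
   non-square mu) is a square r^2, and d exists because cubing is a bijection when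
   3 does not divide q - 1. *)

Definition nonsquare (F : fieldType) (x : F) := forall z : F, z * z != x.

Local Notation Lc := (line_mx (vec4 1 0 0 1) (vec4 0 0 1 0)).
Local Notation ell mu := (line_mx (vec4 0 mu 0 1) (vec4 1 0 1 0)).

Ltac case_ord4 i := case: i => [[|[|[|[|?]]]] ?] //=; rewrite ?mxE /=.

Lemma ord4_cases (i : 'I_4) : [\/ i = 0, i = 1, i = 2 | i = 3].
Proof.
by case: i => [[|[|[|[|//]]]] ?]; [constructor 1 | constructor 2 | constructor 3 | constructor 4];
  apply/val_inj.
Qed.

Lemma mulfI0 (F : fieldType) (k x : F) : k != 0 -> k * x = 0 -> x = 0.
Proof. by move=> k0 /eqP; rewrite mulf_eq0 (negbTE k0) => /eqP. Qed.

Lemma nonsquareMsqr (F : fieldType) (x y : F) : nonsquare (x * (y * y)) -> nonsquare x.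
Proof. by move=> xy_nsq z; apply: contra_neq (xy_nsq (z * y)) => <-; rewrite mulrACA. Qed.

Lemma four_neq0 (F : fieldType) : 2%:R != 0 :> F -> 4%:R != 0 :> F.
Proof. by move=> two0; rewrite (_ : 4%:R = 2%:R * 2%:R) ?mulf_neq0 //; ring. Qed.

Section FiniteFieldPowers.
Variable F : finFieldType.
Local Notation q := #|F|.

Lemma card_gt1 : (1 < q)%N.
Proof. exact: finNzRing_gt1. Qed.

Lemma natf_prime_neq0 p : prime p -> ~~ (p %| q)%N -> (p%:R : F) != 0.
Proof.
move=> p_pr; apply: contra => p0.
have pchar_p : p \in [pchar F] by rewrite inE p_pr p0.
rewrite -(@order_pprimeChar p F pchar_p 1 (oner_neq0 _)) -cardsT.
exact: order_dvdG (in_setT _).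
Qed.

Lemma card_odd_two_neq0 : odd q -> (2%:R : F) != 0.
Proof. by move=> q_odd; apply: natf_prime_neq0; rewrite // dvdn2 q_odd. Qed.

Lemma card_mod3_three_neq0 : (q %% 3 = 2)%N -> (3%:R : F) != 0.
Proof. by move=> q_mod3; apply: natf_prime_neq0; rewrite // /dvdn q_mod3. Qed.

Lemma expf_card_pred (x : F) : x != 0 -> x ^+ q.-1 = 1.
Proof.
move=> x0; apply: (mulIf x0); rewrite mul1r -exprSr prednK ?expf_card //.
exact: ltnW card_gt1.
Qed.

Lemma exists_prim_root : exists g : F, q.-1.-primitive_root g.
Proof.
have q1_gt0 : (0 < q.-1)%N by have := card_gt1; lia.
have : has q.-1.-primitive_root (enum (predC1 (0 : F))).
  apply: has_prim_root => //; last by rewrite -cardE cardC1.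
    by apply/allP => x; rewrite mem_enum inE unity_rootE => /expf_card_pred ->.
  exact: enum_uniq.
by case/hasP => g _; exists g.
Qed.

Lemma nonsquare_odd_exp (g x : F) : q.-1.-primitive_root g -> nonsquare x ->
  exists2 i, odd i & x = g ^+ i.
Proof.
move=> g_prim x_nsq.
have x0 : x != 0 by apply: contraNneq (x_nsq 0) => ->; rewrite mulr0.
have [[i _] /= xE] := prim_rootP g_prim (expf_card_pred x0).
exists i => //; apply: contraTT (x_nsq (g ^+ i./2)) => /negbTE i_even.
have halfK : (i./2).*2 = i by rewrite -[RHS]odd_double_half i_even.
by rewrite -exprD addnn halfK xE eqxx.
Qed.

Lemma nonsquareM (x y : F) : nonsquare x -> nonsquare y -> exists z, z * z = x * y.
Proof.
move=> x_nsq y_nsq; have [g g_prim] := exists_prim_root.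
have [i i_odd ->] := nonsquare_odd_exp g_prim x_nsq.
have [j j_odd ->] := nonsquare_odd_exp g_prim y_nsq.
exists (g ^+ (i./2 + j./2).+1); rewrite -!exprD; congr (g ^+ _).
by have := odd_double_half i; have := odd_double_half j; rewrite i_odd j_odd; lia.
Qed.

Lemma square_N1 : (q %% 4 = 1)%N -> ~ nonsquare (-1 : F).
Proof.
move=> q_mod4 N1_nsq; have [g g_prim] := exists_prim_root.
have [i i_odd N1E] := nonsquare_odd_exp g_prim N1_nsq.
have : (q.-1 %| i.*2)%N by rewrite (prim_order_dvd g_prim) -muln2 exprM -N1E sqrrN expr1n.
have four_dvd : (4 %| q.-1)%N by have := card_gt1; lia.
by move/(dvdn_trans four_dvd); lia.
Qed.

Lemma nonsquare_N1 : (q %% 4 = 3)%N -> nonsquare (-1 : F).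
Proof.
move=> q_mod4 z; apply/eqP => zz.
have two0 : (2%:R : F) != 0 by apply: card_odd_two_neq0; lia.
have z0 : z != 0 by apply: contra_eq_neq zz => ->; rewrite mulr0 eq_sym oppr_eq0 oner_eq0.
have := expf_card_pred z0.
have -> : q.-1 = (2 * (2 * (q.-1 %/ 4) + 1))%N by have := card_gt1; lia.
rewrite exprM expr2 zz -signr_odd oddD oddM /= expr1 => /eqP.
by rewrite -subr_eq0 -opprD oppr_eq0 (negbTE two0).
Qed.

Lemma cube_root1 (w : F) : (q %% 3 = 2)%N -> w ^+ 3 = 1 -> w = 1.
Proof.
move=> q_mod3 w3.
have w0 : w != 0 by apply: contra_eq_neq w3 => ->; rewrite expr0n eq_sym oner_eq0.
have := expf_card_pred w0.
have -> : q.-1 = (3 * (q.-1 %/ 3) + 1)%N by have := card_gt1; lia.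
by rewrite exprD exprM w3 expr1n mul1r expr1.
Qed.

(* A square root s of -3 would make (s - 1) / 2 a nontrivial cube root of unity. *)
Lemma nonsquare_N3 : odd q -> (q %% 3 = 2)%N -> nonsquare (- 3%:R : F).
Proof.
move=> q_odd q_mod3 s; apply/eqP => ss.
have two0 := card_odd_two_neq0 q_odd.
have three0 := card_mod3_three_neq0 q_mod3.
have w1 : (s - 1) / 2%:R = 1.
  apply: (@cube_root1 _ q_mod3); apply/eqP; rewrite -subr_eq0.
  have -> : ((s - 1) / 2%:R) ^+ 3 - 1 = (s * s + 3%:R) * ((s - 1) / 2%:R - 1) / 4%:R.
    by field; rewrite four_neq0 // two0.
  by rewrite ss addNr !mul0r.
have s3 : s = 3%:R by rewrite -[s](subrK 1) -(divfK two0 (s - 1)) w1; ring.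
have : 3%:R * (2%:R * 2%:R) = 0 :> F by rewrite -(subrr (s * s)) {2}ss s3; ring.
by apply/eqP; rewrite !mulf_neq0.
Qed.

Lemma cube_root_exists (x : F) : (q %% 3 = 2)%N -> exists t, t ^+ 3 = x.
Proof.
move=> q_mod3.
have cube_inj : injective (fun t : F => t ^+ 3).
  move=> t u /= tu; have [u0 | u0] := eqVneq u 0.
    by move: tu; rewrite u0 expr0n /= => /eqP; rewrite expf_eq0 /= => /eqP.
  rewrite -(divfK u0 t) (@cube_root1 (t / u) q_mod3) ?mul1r //.
  by rewrite expr_div_n tu divff // expf_neq0.
have [cbrt _ cbrtK] := injF_bij cube_inj.
by exists (cbrt x); rewrite cbrtK.
Qed.

End FiniteFieldPowers.

Section TwistedCubic.
Variable F : fieldType.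
Implicit Types (a b c d k x y : F) (v : 'rV[F]_4).

Lemma vec4_mulmx (p0 p1 p2 p3 : F) (A : 'M[F]_4) :
  vec4 p0 p1 p2 p3 *m A = \row_j (p0 * A 0 j + p1 * A 1 j + p2 * A 2 j + p3 * A 3 j).
Proof.
apply/rowP => j; rewrite !mxE !big_ord_recr big_ord0 /= !mxE /= add0r.
by congr (_ + _ + _ + _); congr (_ * A _ j); apply/val_inj.
Qed.

Definition cubic_point x y : 'rV[F]_4 := vec4 (x ^+ 3) (x ^+ 2 * y) (x * y ^+ 2) (y ^+ 3).

(* Row i holds the coefficients of x^(3-i) y^i in cubic_point (a x + c y) (b x + d y). *)
Definition sym3 a b c d : 'M[F]_4 := \matrix_(i < 4) nth 0 [:: cubic_point a b;
  vec4 (3%:R * a ^+ 2 * c) (a ^+ 2 * d + 2%:R * a * b * c)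
       (2%:R * a * b * d + b ^+ 2 * c) (3%:R * b ^+ 2 * d);
  vec4 (3%:R * a * c ^+ 2) (2%:R * a * c * d + b * c ^+ 2)
       (a * d ^+ 2 + 2%:R * b * c * d) (3%:R * b * d ^+ 2);
  cubic_point c d] i.

Lemma cubic_point_sym3 a b c d x y :
  cubic_point x y *m sym3 a b c d = cubic_point (a * x + c * y) (b * x + d * y).
Proof. by rewrite vec4_mulmx; apply/rowP => j; rewrite !mxE; case_ord4 j; ring. Qed.

Lemma sym3_mul a b c d a' b' c' d' :
  sym3 a b c d *m sym3 a' b' c' d' =
  sym3 (a * a' + b * c') (a * b' + b * d') (c * a' + d * c') (c * b' + d * d').
Proof.
apply/matrixP => i j; rewrite !mxE !big_ord_recr big_ord0 /= !mxE /= add0r.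
by case_ord4 i; case_ord4 j; ring.
Qed.

Lemma sym3_id : sym3 1 0 0 1 = 1%:M.
Proof. by apply/matrixP => i j; rewrite !mxE; case_ord4 i; case_ord4 j; ring. Qed.

Lemma sym3K a b c d (D := a * d - b * c) : D != 0 ->
  sym3 a b c d *m sym3 (d / D) (- b / D) (- c / D) (a / D) = 1%:M /\
  sym3 (d / D) (- b / D) (- c / D) (a / D) *m sym3 a b c d = 1%:M.
Proof. by move=> D0; rewrite !sym3_mul -sym3_id; split; congr sym3; rewrite /D; field. Qed.

Lemma cubic_pointZ k x y : cubic_point (k * x) (k * y) = k ^+ 3 *: cubic_point x y.
Proof. by apply/rowP => j; rewrite !mxE; case_ord4 j; ring. Qed.

Lemma onC_cubic_pointP v :
  onC v <-> exists k x y, [/\ k != 0, (x != 0) || (y != 0) & v = k *: cubic_point x y].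
Proof.
split=> [[[t [k [k0 ->]]] | [k [k0 ->]]] | [k [x [y [k0 xy0 ->]]]]].
- exists k, t, 1; split; rewrite ?oner_eq0 ?orbT //.
  by congr (_ *: _); apply/rowP => j; rewrite !mxE; case_ord4 j; ring.
- exists k, 1, 0; split; rewrite ?oner_eq0 //.
  by congr (_ *: _); apply/rowP => j; rewrite !mxE; case_ord4 j; ring.
have [y0 | y0] := eqVneq y 0.
  move: xy0; rewrite y0 eqxx orbF => x0; right; exists (k * x ^+ 3); split.
    by rewrite mulf_neq0 ?expf_neq0.
  by apply/rowP => j; rewrite !mxE; case_ord4 j; ring.
left; exists (x / y), (k * y ^+ 3); split; first by rewrite mulf_neq0 ?expf_neq0.
by apply/rowP => j; rewrite !mxE; case_ord4 j; field.
Qed.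

Lemma onC_neq0 v : onC v -> v != 0.
Proof.
case/onC_cubic_pointP => k [x [y [k0 xy0 ->]]]; rewrite scaler_eq0 negb_or k0 /=.
apply: contraTN xy0 => /eqP/rowP v0; rewrite negb_or !negbK.
have := v0 0; have := v0 3; rewrite !mxE /= => /eqP y3 /eqP x3.
by move: x3 y3; rewrite !expf_eq0 /= => -> ->.
Qed.

Lemma onC_hankel v : onC v -> v 0 1 ^+ 2 = v 0 0 * v 0 2 /\ v 0 2 ^+ 2 = v 0 1 * v 0 3.
Proof. by case/onC_cubic_pointP => k [x [y [_ _ ->]]]; rewrite !mxE /=; split; ring. Qed.

Lemma onC_sym3 a b c d v : a * d - b * c != 0 -> onC v -> onC (v *m sym3 a b c d).
Proof.
move=> det0 /onC_cubic_pointP [k [x [y [k0 xy0 ->]]]].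
rewrite -scalemxAl cubic_point_sym3; apply/onC_cubic_pointP.
exists k, (a * x + c * y), (b * x + d * y); split=> //.
apply: contraTT xy0; rewrite negb_or !negbK => /andP[/eqP e1 /eqP e2].
have ex : (a * d - b * c) * x = 0.
  have -> : (a * d - b * c) * x = d * (a * x + c * y) - c * (b * x + d * y) by ring.
  by rewrite e1 e2; ring.
have ey : (a * d - b * c) * y = 0.
  have -> : (a * d - b * c) * y = a * (b * x + d * y) - b * (a * x + c * y) by ring.
  by rewrite e1 e2; ring.
by rewrite (mulfI0 det0 ex) (mulfI0 det0 ey) eqxx.
Qed.

Lemma inGq_sym3 a b c d : a * d - b * c != 0 -> inGq (sym3 a b c d).
Proof.
move=> det0; have [SS' _] := sym3K det0; set D := a * d - b * c in SS'.
split; first by case: (mulmx1_unit SS').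
move=> v _; split; first exact: onC_sym3.
have det'0 : d / D * (a / D) - - b / D * (- c / D) != 0.
  by rewrite (_ : _ - _ = D^-1) ?invr_eq0 // /D; field.
by move/(onC_sym3 det'0); rewrite -mulmxA SS' mulmx1.
Qed.

End TwistedCubic.

Section Classification.
Variable F : fieldType.
Implicit Types (k x y : F) (v : 'rV[F]_4).

Lemma cubic_eq0 (c3 c2 c1 c0 : F) : 2%:R != 0 :> F -> 3%:R != 0 :> F ->
  (forall t, t != 0 -> c3 * t ^+ 3 + c2 * t ^+ 2 + c1 * t + c0 = 0) ->
  [/\ c3 = 0, c2 = 0, c1 = 0 & c0 = 0].
Proof.
move=> two0 three0 P.
have P1 := P 1 (oner_neq0 _); have P2 := P 2%:R two0.
move: (P (-1)) (P (- 2%:R)); rewrite !oppr_eq0 oner_eq0 (negbTE two0) => /(_ isT) PN1 /(_ isT) PN2.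
(* even and odd parts at t = 1 and t = 2 *)
have even1 : c2 + c0 = 0.
  by apply: (mulfI0 two0); rewrite -[RHS](addr0 0) -{1}P1 -PN1; ring.
have even2 : 4%:R * c2 + c0 = 0.
  by apply: (mulfI0 two0); rewrite -[RHS](addr0 0) -{1}P2 -PN2; ring.
have odd1 : c3 + c1 = 0.
  by apply: (mulfI0 two0); rewrite -[RHS](subr0 0) -{1}P1 -PN1; ring.
have odd2 : 4%:R * c3 + c1 = 0.
  by apply: (mulfI0 (mulf_neq0 two0 two0)); rewrite -[RHS](subr0 0) -{1}P2 -PN2; ring.
have c2_0 : c2 = 0 by apply: (mulfI0 three0); rewrite -[RHS](subr0 0) -{1}even2 -even1; ring.
have c3_0 : c3 = 0 by apply: (mulfI0 three0); rewrite -[RHS](subr0 0) -{1}odd2 -odd1; ring.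
by split=> //; [rewrite -odd1 c3_0 add0r | rewrite -even1 c2_0 add0r].
Qed.

(* The hypothesis is onC_hankel for the image of cubic_point t 1 under the
   matrix with rows k1 *: cubic_point 1 0, (p_j), (s_j) and k4 *: cubic_point 0 1. *)
Lemma hankel_diag k1 k4 (p0 p1 p2 p3 s0 s1 s2 s3 : F) :
  2%:R != 0 :> F -> 3%:R != 0 :> F -> k1 != 0 -> k4 != 0 -> (p1 != 0) || (s1 != 0) ->
  (forall t, (t ^+ 2 * p1 + t * s1) ^+ 2 = (t ^+ 3 * k1 + t ^+ 2 * p0 + t * s0) * (t ^+ 2 * p2 + t * s2)
          /\ (t ^+ 2 * p2 + t * s2) ^+ 2 = (t ^+ 2 * p1 + t * s1) * (t ^+ 2 * p3 + t * s3 + k4)) ->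
  [/\ p0 = 0, p2 = 0, p3 = 0, s0 = 0 & [/\ s1 = 0, s3 = 0, k1 * s2 = p1 ^+ 2 & s2 ^+ 2 = p1 * k4]].
Proof.
move=> two0 three0 k1_0 k4_0 ps1 H.
have [a3 a2 a1 a0] : [/\ - k1 * p2 = 0, p1 ^+ 2 - k1 * s2 - p0 * p2 = 0,
    2%:R * p1 * s1 - p0 * s2 - s0 * p2 = 0 & s1 ^+ 2 - s0 * s2 = 0].
  apply: cubic_eq0 => // t t0; apply: (mulfI0 (expf_neq0 2 t0)).
  by rewrite -(subrr ((t ^+ 2 * p1 + t * s1) ^+ 2)) {2}(proj1 (H t)); ring.
have [b3 b2 b1 b0] : [/\ p2 ^+ 2 - p1 * p3 = 0, 2%:R * p2 * s2 - p1 * s3 - s1 * p3 = 0,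
    s2 ^+ 2 - p1 * k4 - s1 * s3 = 0 & - s1 * k4 = 0].
  apply: cubic_eq0 => // t t0; apply: (mulfI0 t0).
  by rewrite -(subrr ((t ^+ 2 * p2 + t * s2) ^+ 2)) {2}(proj2 (H t)); ring.
have p2_0 : p2 = 0 by apply: (@mulfI0 _ (- k1)); rewrite ?oppr_eq0.
have s1_0 : s1 = 0 by apply: (@mulfI0 _ (- k4)); rewrite ?oppr_eq0 // -b0; ring.
move: ps1 a3 a2 a1 a0 b3 b2 b1 b0; rewrite p2_0 s1_0 eqxx orbF => p1_0 _ a2 a1 a0 b3 b2 b1 _.
have k1s2 : k1 * s2 = p1 ^+ 2 by apply/eqP; rewrite eq_sym -subr_eq0 -a2; apply/eqP; ring.
have s2_0 : s2 != 0.
  by apply: contra_eq_neq k1s2 => ->; rewrite mulr0 eq_sym expf_neq0.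
split=> //.
- by apply: (mulfI0 s2_0); rewrite -[RHS]oppr0 -a1; ring.
- by apply: (mulfI0 p1_0); rewrite -[RHS]oppr0 -b3; ring.
- by apply: (mulfI0 s2_0); rewrite -[RHS]oppr0 -a0; ring.
split=> //; last by apply/eqP; rewrite -subr_eq0 -b1; apply/eqP; ring.
by apply: (mulfI0 p1_0); rewrite -[RHS]oppr0 -b2; ring.
Qed.

Lemma unitmx_col_neq0 n (B : 'M[F]_n) j : B \in unitmx -> col j B != 0.
Proof.
move=> B_unit; apply/eqP => Bj0.
have : delta_mx j 0 = 0 :> 'cV[F]_n by rewrite -(mulKmx B_unit (delta_mx j 0)) -colE Bj0 mulmx0.
by move/matrixP/(_ j 0); rewrite !mxE !eqxx /= => /eqP; rewrite oner_eq0.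
Qed.

Lemma sym3_of_fix_ends (B : 'M[F]_4) k1 k4 :
  2%:R != 0 :> F -> 3%:R != 0 :> F -> B \in unitmx -> (forall v, onC v -> onC (v *m B)) ->
  k1 != 0 -> k4 != 0 ->
  cubic_point 1 0 *m B = k1 *: cubic_point 1 0 -> cubic_point 0 1 *m B = k4 *: cubic_point 0 1 ->
  exists2 r, r != 0 & B = k1 *: sym3 1 0 0 r.
Proof.
move=> two0 three0 B_unit B_onC k1_0 k4_0 e1B e4B.
have row0 j : B 0 j = (k1 *: cubic_point 1 0) 0 j.
  by rewrite -e1B /cubic_point vec4_mulmx mxE; ring.
have row3 j : B 3 j = (k4 *: cubic_point 0 1) 0 j.
  by rewrite -e4B /cubic_point vec4_mulmx mxE; ring.
have col1 : (B 1 1 != 0) || (B 2 1 != 0).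
  apply: contraTT (unitmx_col_neq0 1 B_unit); rewrite negb_or !negbK => /andP[/eqP p1 /eqP s1].
  apply/eqP/colP => i; rewrite !mxE.
  by case: (ord4_cases i) => ->; rewrite ?p1 ?s1 ?row0 ?row3 ?mxE /=; ring.
have hankel_t t :
  (t ^+ 2 * B 1 1 + t * B 2 1) ^+ 2 =
    (t ^+ 3 * k1 + t ^+ 2 * B 1 0 + t * B 2 0) * (t ^+ 2 * B 1 2 + t * B 2 2) /\
  (t ^+ 2 * B 1 2 + t * B 2 2) ^+ 2 =
    (t ^+ 2 * B 1 1 + t * B 2 1) * (t ^+ 2 * B 1 3 + t * B 2 3 + k4).
  have t_onC : onC (cubic_point t 1).
    by apply/onC_cubic_pointP; exists 1, t, 1; rewrite oner_eq0 orbT scale1r.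
  set w := cubic_point t 1 *m B.
  have [w0 w1 w2 w3] : [/\ w 0 0 = t ^+ 3 * k1 + t ^+ 2 * B 1 0 + t * B 2 0,
      w 0 1 = t ^+ 2 * B 1 1 + t * B 2 1, w 0 2 = t ^+ 2 * B 1 2 + t * B 2 2
    & w 0 3 = t ^+ 2 * B 1 3 + t * B 2 3 + k4].
    by rewrite /w /cubic_point vec4_mulmx !mxE !row0 !row3 !mxE /=; split; ring.
  by have := onC_hankel (B_onC _ t_onC); rewrite -/w w0 w1 w2 w3.
have [p0 p2 p3 s0 [s1 s3 k1s2 s2k4]] := hankel_diag two0 three0 k1_0 k4_0 col1 hankel_t.
have p1_0 : B 1 1 != 0 by move: col1; rewrite s1 eqxx orbF.
exists (B 1 1 / k1); first by rewrite mulf_neq0 ?invr_eq0.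
have s2E : B 2 2 = B 1 1 ^+ 2 / k1 by rewrite -k1s2; field.
have k4E : k4 = B 1 1 ^+ 3 / k1 ^+ 2 by apply: (mulfI p1_0); rewrite -s2k4 s2E; field.
apply/matrixP => i j; rewrite !mxE.
case: (ord4_cases i) => ->; case: (ord4_cases j) => ->;
  rewrite ?row0 ?row3 ?p0 ?p2 ?p3 ?s0 ?s1 ?s3 ?s2E ?k4E !mxE /=; by field.
Qed.

Lemma cubic_point_dep x y x' y' : x * y' - y * x' = 0 -> (x' != 0) || (y' != 0) ->
  exists l, cubic_point x y = l *: cubic_point x' y'.
Proof.
move=> dep0 xy'0; have [x'0 | x'0] := eqVneq x' 0.
  move: xy'0 dep0; rewrite x'0 eqxx /= mulr0 subr0 => y'0 /eqP.
  rewrite mulf_eq0 (negbTE y'0) orbF => /eqP ->.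
  by exists ((y / y') ^+ 3); rewrite -cubic_pointZ mulr0 divfK.
exists ((x / x') ^+ 3); rewrite -cubic_pointZ divfK //; congr cubic_point.
apply/eqP; rewrite -subr_eq0 (_ : _ - _ = - (x * y' - y * x') / x'); last by field.
by rewrite dep0 oppr0 mul0r.
Qed.

Lemma cubic_point_images_indep (A : 'M[F]_4) k1 k4 x1 y1 x4 y4 :
  A \in unitmx -> k4 != 0 -> (x4 != 0) || (y4 != 0) ->
  cubic_point 1 0 *m A = k1 *: cubic_point x1 y1 -> cubic_point 0 1 *m A = k4 *: cubic_point x4 y4 ->
  x1 * y4 - y1 * x4 != 0.
Proof.
move=> A_unit k4_0 xy4 e1A e4A; apply/eqP => /cubic_point_dep/(_ xy4) [l e14].
have : (cubic_point 1 0 - (k1 * l / k4) *: cubic_point 0 1) *m A == 0.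
  by rewrite mulmxBl -!scalemxAl e1A e4A e14 !scalerA divfK // subrr.
rewrite (mulmx_free_eq0 _ (_ : row_free A)) ?row_free_unit //.
move/eqP/rowP/(_ 0); rewrite !mxE /= => h.
have : (1 : F) = 0 by rewrite -h; ring.
by move/eqP; rewrite oner_eq0.
Qed.

Lemma Gq_sym3 (A : 'M[F]_4) : 2%:R != 0 :> F -> 3%:R != 0 :> F -> inGq A ->
  exists l a b c d, [/\ l != 0, a * d - b * c != 0 & A = l *: sym3 a b c d].
Proof.
move=> two0 three0 [A_unit A_Gq].
have A_onC v : onC v -> onC (v *m A) by move=> v_onC; apply/(A_Gq _ (onC_neq0 v_onC)).
have e1_onC : onC (cubic_point 1 0 : 'rV[F]_4).
  by apply/onC_cubic_pointP; exists 1, 1, 0; rewrite oner_eq0 scale1r.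
have e4_onC : onC (cubic_point 0 1 : 'rV[F]_4).
  by apply/onC_cubic_pointP; exists 1, 0, 1; rewrite oner_eq0 orbT scale1r.
have [k1 [x1 [y1 [k1_0 _ e1A]]]] := iffLR (onC_cubic_pointP _) (A_onC _ e1_onC).
have [k4 [x4 [y4 [k4_0 xy4 e4A]]]] := iffLR (onC_cubic_pointP _) (A_onC _ e4_onC).
set D := x1 * y4 - y1 * x4.
have D0 : D != 0 := cubic_point_images_indep A_unit k4_0 xy4 e1A e4A.
have [_ S'S] := sym3K D0; rewrite -/D in S'S.
set S' := sym3 (y4 / D) _ _ _ in S'S.
have detS'0 : y4 / D * (x1 / D) - - y1 / D * (- x4 / D) != 0.
  by rewrite (_ : _ - _ = D^-1) ?invr_eq0 // /D; field.
have B_unit : A *m S' \in unitmx.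
  by rewrite unitmx_mul A_unit; case: (mulmx1_unit S'S).
have B_onC v : onC v -> onC (v *m (A *m S')).
  by move/A_onC; rewrite mulmxA; apply: onC_sym3.
have e1B : cubic_point 1 0 *m (A *m S') = k1 *: cubic_point 1 0.
  by rewrite mulmxA e1A -scalemxAl cubic_point_sym3; congr (_ *: cubic_point _ _); rewrite /D; field.
have e4B : cubic_point 0 1 *m (A *m S') = k4 *: cubic_point 0 1.
  by rewrite mulmxA e4A -scalemxAl cubic_point_sym3; congr (_ *: cubic_point _ _); rewrite /D; field.
have [r r0 BE] := sym3_of_fix_ends two0 three0 B_unit B_onC k1_0 k4_0 e1B e4B.
exists k1, x1, y1, (r * x4), (r * y4); split=> //.
  by rewrite (_ : _ - _ = r * D) ?mulf_neq0 // /D; ring.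
by rewrite -[A]mulmx1 -S'S mulmxA BE -scalemxAl sym3_mul; congr (_ *: sym3 _ _ _ _); ring.
Qed.

End Classification.

Section Lines.
Variable F : fieldType.

Lemma rV2_mul_line_mx (w : 'rV[F]_2) (u v : 'rV[F]_4) :
  w *m line_mx u v = w 0 0 *: u + w 0 1 *: v.
Proof.
rewrite mulmx_sum_row !big_ord_recr big_ord0 /= add0r.
have -> : widen_ord (leqnSn 1) ord_max = lshift 1 (0 : 'I_1) by apply/val_inj.
have -> : ord_max = rshift 1 (0 : 'I_1) by apply/val_inj.
rewrite /line_mx (@rowKu _ 1%N 1%N) (@rowKd _ 1%N 1%N).
have rowK (x : 'rV[F]_4) : row 0 x = x by apply/rowP => j; rewrite mxE.
by rewrite !rowK; congr (w 0 _ *: _ + w 0 _ *: _); apply/val_inj.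
Qed.

Lemma sub_line_mxP (u v x : 'rV[F]_4) :
  (x <= line_mx u v)%MS <-> exists a b, x = a *: u + b *: v.
Proof.
split=> [/submxP [w ->] | [a [b ->]]]; first by exists (w 0 0), (w 0 1); rewrite rV2_mul_line_mx.
apply/submxP; exists (\row_j (if j == 0 then a else b)).
by rewrite rV2_mul_line_mx !mxE.
Qed.

Lemma line_mx_mulmx_sub n (u v : 'rV[F]_4) (A : 'M[F]_(4, n)) (M : 'M[F]_(2, n)) :
  (line_mx u v *m A <= M)%MS = (u *m A <= M)%MS && (v *m A <= M)%MS.
Proof. by rewrite /line_mx (@mul_col_mx _ 1 1) (@col_mx_sub _ 1 1). Qed.

Lemma eqmx_mulmx_row_free m n (L M : 'M[F]_(m, n)) (A : 'M[F]_n) :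
  row_free L -> A \in unitmx -> (L *m A <= M)%MS -> (L *m A == M)%MS.
Proof.
move=> L_free A_unit LA_sub; rewrite -(eq_leqif (mxrank_leqif_eq LA_sub)) eqn_leq mxrankS //=.
by rewrite mxrankMfree ?row_free_unit // (eqP L_free) rank_leq_row.
Qed.

Lemma Lc_row_free : row_free (Lc : 'M[F]_(2, 4)).
Proof.
apply: inj_row_free => w; rewrite rV2_mul_line_mx => /rowP wL0.
have := wL0 0; have := wL0 2; rewrite !mxE /= => w1 w0.
apply/rowP => j; rewrite mxE.
have [-> | ->] : j = 0 \/ j = 1 by case: j => [[|[|//]] ?]; [left | right]; apply/val_inj.
- by rewrite -w0; ring.
- by rewrite -w1; ring.
Qed.

Lemma sub_ell_mu mu (x : 'rV[F]_4) :
  (x <= ell mu)%MS <-> x 0 0 = x 0 2 /\ x 0 1 = mu * x 0 3.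
Proof.
rewrite sub_line_mxP; split=> [[a [b ->]] | [x02 x13]]; first by rewrite !mxE /=; split; ring.
exists (x 0 3), (x 0 0); apply/rowP => j; rewrite !mxE.
by case: (ord4_cases j) => ->; rewrite ?x02 ?x13 ?mxE /=; ring.
Qed.

Lemma Lc_sym3_sub_ell mu (a b c d : F) :
  (Lc *m sym3 a b c d <= ell mu)%MS <->
  [/\ a ^+ 3 + c ^+ 3 = a * b ^+ 2 + c * d ^+ 2, a ^+ 2 * b + c ^+ 2 * d = mu * (b ^+ 3 + d ^+ 3),
      3%:R * a * c ^+ 2 = a * d ^+ 2 + 2%:R * b * c * d
    & 2%:R * a * c * d + b * c ^+ 2 = mu * (3%:R * b * d ^+ 2)].
Proof.
rewrite line_mx_mulmx_sub.
have -> : vec4 1 0 0 1 *m sym3 a b c d =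
    vec4 (a ^+ 3 + c ^+ 3) (a ^+ 2 * b + c ^+ 2 * d) (a * b ^+ 2 + c * d ^+ 2) (b ^+ 3 + d ^+ 3).
  by rewrite vec4_mulmx; apply/rowP => j; rewrite !mxE; case_ord4 j; ring.
have -> : vec4 0 0 1 0 *m sym3 a b c d =
    vec4 (3%:R * a * c ^+ 2) (2%:R * a * c * d + b * c ^+ 2)
         (a * d ^+ 2 + 2%:R * b * c * d) (3%:R * b * d ^+ 2).
  by rewrite vec4_mulmx; apply/rowP => j; rewrite !mxE; case_ord4 j; ring.
split=> [/andP[/sub_ell_mu[+ +] /sub_ell_mu[+ +]] | [e1 e2 e3 e4]]; rewrite ?mxE //=.
by apply/andP; split; apply/sub_ell_mu; rewrite !mxE.
Qed.

End Lines.

(* The conditions on z = r^2 in the normal form of sym3_normal_form, see Lc_sub_ell_normal. *)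
Definition rho_quad (F : fieldType) (mu z : F) := z ^+ 2 + (1 - 3%:R * mu) * z + mu.

Definition rho_cubic (F : fieldType) (mu z : F) :=
  (10%:R + 9%:R * mu) * z ^+ 2 - 9%:R * mu * z ^+ 3 - (2%:R + 9%:R * mu) * z + mu.

Section PencilAlgebra.
Variables (F : fieldType) (mu : F).
Hypotheses (two0 : 2%:R != 0 :> F) (three0 : 3%:R != 0 :> F).

Lemma rho_cubic_mod_quad z : rho_cubic mu z =
  (10%:R + 18%:R * mu - 27%:R * mu ^+ 2 - 9%:R * mu * z) * rho_quad mu z
  - 3%:R * (3%:R * mu + 1) * (mu - 1) * ((9%:R * mu - 4%:R) * z - 3%:R * mu).
Proof. by rewrite /rho_cubic /rho_quad; ring. Qed.

Lemma rho_quad_third z : 3%:R * mu + 1 = 0 ->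
  3%:R * rho_quad mu z = 3%:R * z ^+ 2 + 6%:R * z - 1.
Proof.
move=> mu3; rewrite -[RHS]addr0 -(mul0r (1 - 3%:R * z)) -mu3 /rho_quad; ring.
Qed.

Lemma rho_quad_common_root z : z != 0 -> z != 1 ->
  rho_quad mu z = 0 -> rho_cubic mu z = 0 -> 3%:R * mu + 1 = 0.
Proof.
move=> z0 z1 quad0 cubic0.
have : (3%:R * mu + 1) * (mu - 1) * ((9%:R * mu - 4%:R) * z - 3%:R * mu) = 0.
  by apply: (mulfI0 three0); rewrite -[RHS]oppr0 -cubic0 rho_cubic_mod_quad quad0; ring.
move/eqP; rewrite !mulf_eq0 => /orP[/orP[/eqP // | ] | /eqP e].
  rewrite subr_eq0 => /eqP mu1.
  have : (z - 1) ^+ 2 = 0 by rewrite -quad0 /rho_quad mu1; ring.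
  by move/eqP; rewrite expf_eq0 subr_eq0 (negbTE z1).
have mu0 : mu = 0.
  apply: (mulfI0 (four_neq0 two0)).
  (* substituting (9 mu - 4) z = 3 mu into (9 mu - 4)^2 rho_quad mu z leaves 4 mu *)
  have -> : 4%:R * mu = (9%:R * mu - 4%:R) ^+ 2 * rho_quad mu z - ((9%:R * mu - 4%:R) * z - 3%:R * mu)
      * ((9%:R * mu - 4%:R) * z - 3%:R * mu + 6%:R * mu + (1 - 3%:R * mu) * (9%:R * mu - 4%:R)).
    by rewrite /rho_quad; ring.
  by rewrite quad0 e; ring.
have : 4%:R * z = 0 by rewrite -[RHS]oppr0 -e mu0; ring.
by move/(mulfI0 (four_neq0 two0))/eqP; rewrite (negbTE z0).
Qed.

Lemma sym3_normal_form a b c d : a * d - b * c != 0 ->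
  3%:R * a * c ^+ 2 = a * d ^+ 2 + 2%:R * b * c * d ->
  2%:R * a * c * d + b * c ^+ 2 = mu * (3%:R * b * d ^+ 2) ->
  exists r k, [/\ a = 2%:R * r * k, b = (3%:R * r ^+ 2 - 1) * k & c = r * d].
Proof.
move=> det0 e3 e4.
have d0 : d != 0.
  apply: contraNneq det0 => d0; apply/eqP; move: e4; rewrite d0 => e4.
  have : b * c * c = 0.
    have -> : b * c * c = 2%:R * a * c * 0 + b * c ^+ 2 - mu * (3%:R * b * 0 ^+ 2) by ring.
    by rewrite e4 subrr.
  by move/eqP; rewrite mulf_eq0 => /orP[/eqP -> | /eqP ->]; ring.
have c0 : c != 0.
  apply: contraNneq det0 => c0; apply/eqP; move: e3; rewrite c0 => e3.
  have : a * d * d = 0.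
    have -> : a * d * d = a * d ^+ 2 + 2%:R * b * 0 * d - 3%:R * a * 0 ^+ 2 by ring.
    by rewrite e3 subrr.
  by move/eqP; rewrite mulf_eq0 (negbTE d0) orbF => /eqP ->; ring.
exists (c / d), (a * d / (2%:R * c)); split.
- by field; rewrite ?c0 ?two0 ?d0.
- have -> : (3%:R * (c / d) ^+ 2 - 1) * (a * d / (2%:R * c)) =
      (3%:R * a * c ^+ 2 - a * d ^+ 2) / (2%:R * c * d) by field; rewrite ?c0 ?two0 ?d0.
  by rewrite e3; field; rewrite ?c0 ?two0 ?d0.
- by field; rewrite ?c0 ?two0 ?d0.
Qed.

Lemma Lc_sub_ell_normal r k d : k * d * r * (1 - r ^+ 2) != 0 ->
  (Lc *m sym3 (2%:R * r * k) ((3%:R * r ^+ 2 - 1) * k) (r * d) d <= ell mu)%MS <->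
  [/\ d ^+ 3 = 2%:R * k ^+ 3 * (9%:R * r ^+ 2 - 1), rho_quad mu (r ^+ 2) = 0
    & rho_cubic mu (r ^+ 2) = 0].
Proof.
move=> nondeg; rewrite Lc_sym3_sub_ell.
have k0 : k != 0 by apply: contraNneq nondeg => ->; rewrite !mul0r.
have d0 : d != 0 by apply: contraNneq nondeg => ->; rewrite mulr0 !mul0r.
have r0 : r * (1 - r ^+ 2) != 0 by apply: contraNneq nondeg; rewrite -!mulrA => ->; rewrite !mulr0.
set e := d ^+ 3 - 2%:R * k ^+ 3 * (9%:R * r ^+ 2 - 1).
have id1 : (2%:R * r * k) ^+ 3 + (r * d) ^+ 3
    - (2%:R * r * k * ((3%:R * r ^+ 2 - 1) * k) ^+ 2 + r * d * d ^+ 2) = - (r * (1 - r ^+ 2)) * e.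
  by rewrite /e; ring.
have id2 : (2%:R * r * k) ^+ 2 * ((3%:R * r ^+ 2 - 1) * k) + (r * d) ^+ 2 * d
    - mu * (((3%:R * r ^+ 2 - 1) * k) ^+ 3 + d ^+ 3)
    = 3%:R * k ^+ 3 * rho_cubic mu (r ^+ 2) + (r ^+ 2 - mu) * e.
  by rewrite /e /rho_cubic; ring.
have id4 : 2%:R * (2%:R * r * k) * (r * d) * d + (3%:R * r ^+ 2 - 1) * k * (r * d) ^+ 2
    - mu * (3%:R * ((3%:R * r ^+ 2 - 1) * k) * d ^+ 2) = 3%:R * k * d ^+ 2 * rho_quad mu (r ^+ 2).
  by rewrite /rho_quad; ring.
split=> [[/eqP e1 /eqP e2 _ /eqP e4] | [/eqP e0 quad0 cubic0]].
  rewrite -subr_eq0 {}id1 mulf_eq0 oppr_eq0 (negbTE r0) /= in e1.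
  rewrite -subr_eq0 {}id4 !mulf_eq0 (negbTE three0) (negbTE k0) (negbTE d0) /= in e4.
  rewrite -subr_eq0 {}id2 (eqP e1) mulr0 addr0 !mulf_eq0 (negbTE three0) ?expf_eq0 (negbTE k0) /= in e2.
  by split; apply/eqP; rewrite // -subr_eq0.
rewrite -subr_eq0 -/e in e0; move/eqP in e0.
split; [| | ring |]; apply/eqP; rewrite -subr_eq0.
- by rewrite id1 e0 mulr0.
- by rewrite id2 e0 cubic0 !mulr0 addr0.
- by rewrite id4 quad0 mulr0.
Qed.

Lemma Lc_sym3_sub_ell_mu a b c d : a * d - b * c != 0 -> (Lc *m sym3 a b c d <= ell mu)%MS ->
  3%:R * mu + 1 = 0 /\ exists s : F, s * s = 3%:R.
Proof.
move=> det0 sub; have /Lc_sym3_sub_ell[_ _ e3 e4] := sub.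
have [r [k [aE bE cE]]] := sym3_normal_form det0 e3 e4; subst a b c.
have nondeg : k * d * r * (1 - r ^+ 2) != 0.
  move: det0; rewrite (_ : _ - _ = 3%:R * (k * d * r * (1 - r ^+ 2))); last by ring.
  by rewrite mulf_eq0 negb_or => /andP[].
have [_ quad0 cubic0] := iffLR (Lc_sub_ell_normal nondeg) sub.
have z0 : r ^+ 2 != 0.
  by apply: contraNneq nondeg => /eqP; rewrite expf_eq0 /= => /eqP ->; rewrite mulr0 mul0r.
have z1 : r ^+ 2 != 1 by apply: contraNneq nondeg => ->; rewrite subrr mulr0.
have mu3 := rho_quad_common_root z0 z1 quad0 cubic0.
split=> //; exists (3%:R * (r ^+ 2 + 1) / 2%:R); apply/eqP; rewrite -subr_eq0.
have -> : 3%:R * (r ^+ 2 + 1) / 2%:R * (3%:R * (r ^+ 2 + 1) / 2%:R) - 3%:R =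
    3%:R * (3%:R * rho_quad mu (r ^+ 2)) / 4%:R
    - 3%:R * (3%:R * mu + 1) * (1 - 3%:R * r ^+ 2) / 4%:R.
  by rewrite /rho_quad; field; rewrite four_neq0 // two0.
by rewrite quad0 mu3 !mulr0 !mul0r subrr.
Qed.

Lemma rho_quad_third_root_neq r : 3%:R * mu + 1 = 0 -> rho_quad mu (r ^+ 2) = 0 ->
  [/\ r != 0, 1 - r ^+ 2 != 0 & 9%:R * r ^+ 2 - 1 != 0].
Proof.
move=> mu3 quad0.
have r_eq : 3%:R * (r ^+ 2) ^+ 2 + 6%:R * r ^+ 2 - 1 = 0.
  by rewrite -[RHS](mulr0 3%:R) -quad0 rho_quad_third //; ring.
have eight0 : 2%:R * 2%:R * 2%:R != 0 :> F by rewrite !mulf_neq0.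
split; apply: contra_eq_neq r_eq.
- move=> ->; have -> : 3%:R * (0 ^+ 2) ^+ 2 + 6%:R * 0 ^+ 2 - 1 = -1 :> F by ring.
  by rewrite oppr_eq0 oner_eq0.
- move/eqP; rewrite subr_eq0 => /eqP r2.
  by have -> : 3%:R * (r ^+ 2) ^+ 2 + 6%:R * r ^+ 2 - 1 = 2%:R * 2%:R * 2%:R :> F by rewrite -r2; ring.
- move/eqP; rewrite subr_eq0 => /eqP r9.
  apply: contra_neq (mulf_neq0 eight0 three0) => r_eq.
  have -> : 2%:R * 2%:R * 2%:R * 3%:R = - (3%:R * (1 - (9%:R * r ^+ 2) ^+ 2)
      + 54%:R * (1 - 9%:R * r ^+ 2) + 81%:R * (3%:R * (r ^+ 2) ^+ 2 + 6%:R * r ^+ 2 - 1)) :> F.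
    by ring.
  by rewrite r9 r_eq; ring.
Qed.

Lemma Lc_ell_same_orbit r d : 3%:R * mu + 1 = 0 -> rho_quad mu (r ^+ 2) = 0 ->
  d ^+ 3 = 2%:R * (9%:R * r ^+ 2 - 1) -> same_orbit Lc (ell mu).
Proof.
move=> mu3 quad0 d3; have [r0 r1 r9] := rho_quad_third_root_neq mu3 quad0.
have d0 : d != 0 by apply: contra_eq_neq d3 => ->; rewrite expr0n /= eq_sym mulf_neq0.
have nondeg : 1 * d * r * (1 - r ^+ 2) != 0 by rewrite !mulf_neq0 ?oner_eq0.
have det0 : 2%:R * r * 1 * d - (3%:R * r ^+ 2 - 1) * 1 * (r * d) != 0.
  have -> : 2%:R * r * 1 * d - (3%:R * r ^+ 2 - 1) * 1 * (r * d) = 3%:R * (1 * d * r * (1 - r ^+ 2)).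
    by ring.
  exact: mulf_neq0.
have cubic0 : rho_cubic mu (r ^+ 2) = 0.
  by rewrite rho_cubic_mod_quad quad0 mu3 !mulr0 !mul0r subrr.
have /(Lc_sub_ell_normal nondeg) sub : [/\ d ^+ 3 = 2%:R * 1 ^+ 3 * (9%:R * r ^+ 2 - 1),
    rho_quad mu (r ^+ 2) = 0 & rho_cubic mu (r ^+ 2) = 0] by rewrite expr1n mulr1.
exists (sym3 (2%:R * r * 1) ((3%:R * r ^+ 2 - 1) * 1) (r * d) d); split; first exact: inGq_sym3.
by apply: eqmx_mulmx_row_free sub; [exact: Lc_row_free | case: (inGq_sym3 det0)].
Qed.

End PencilAlgebra.

Lemma Lc_ell_same_orbit_necessary (F : fieldType) (mu : F) : 2%:R != 0 :> F -> 3%:R != 0 :> F ->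
  same_orbit Lc (ell mu) -> 3%:R * mu + 1 = 0 /\ exists s : F, s * s = 3%:R.
Proof.
move=> two0 three0 [A [A_Gq /andP[LA_sub _]]].
have [l [a [b [c [d [l0 det0 AE]]]]]] := Gq_sym3 two0 three0 A_Gq.
move: LA_sub; rewrite AE -scalemxAr (eqmx_scale _ l0).
exact: Lc_sym3_sub_ell_mu.
Qed.

Lemma exists_square_root_rho_quad (F : finFieldType) (mu : F) : (#|F| %% 12 = 11)%N ->
  3%:R * mu + 1 = 0 -> nonsquare mu -> exists r, rho_quad mu (r ^+ 2) = 0.
Proof.
move=> q_mod12 mu3 mu_nsq.
have q_odd : odd #|F| by lia.
have q_mod3 : (#|F| %% 3 = 2)%N by lia.
have q_mod4 : (#|F| %% 4 = 3)%N by lia.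
have three0 := card_mod3_three_neq0 q_mod3.
have [s ss] := nonsquareM (nonsquare_N1 q_mod4) (nonsquare_N3 q_odd q_mod3).
rewrite mulrNN mul1r in ss.
set z := fun e : F => -1 + e * (2%:R * s / 3%:R).
have root_z e : e * e = 1 -> rho_quad mu (z e) = 0.
  move=> ee; apply: (mulfI three0); rewrite mulr0 rho_quad_third //.
  have -> : 3%:R * z e ^+ 2 + 6%:R * z e - 1 = 4%:R * (e * e * (s * s) - 3%:R) / 3%:R.
    by rewrite /z; field.
  by rewrite ee ss mul1r subrr mulr0 mul0r.
have [/existsP[r /eqP rr] | /existsPn p_nsq] := boolP [exists r, r * r == z 1].
  by exists r; rewrite expr2 rr root_z ?mulr1.
have [/existsP[r /eqP rr] | /existsPn m_nsq] := boolP [exists r, r * r == z (-1)].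
  by exists r; rewrite expr2 rr root_z ?mulrNN ?mulr1.
have [w ww] := nonsquareM p_nsq m_nsq.
case/eqP: (mu_nsq w); rewrite ww; apply: (mulfI three0).
have -> : 3%:R * (z 1 * z (-1)) = -1 + 4%:R * (3%:R - s * s) / 3%:R by rewrite /z; field.
by rewrite ss subrr mulr0 mul0r addr0; apply/eqP; rewrite eq_sym -addr_eq0 mu3.
Qed.

Unset Implicit Arguments.

Theorem lemma7p4 (F : finFieldType) (mu : F) :
  odd #|F| -> (#|F| %% 3 = 2)%N ->
  (forall x : F, x * x != mu) ->
  (same_orbit (line_mx (vec4 1 0 0 1) (vec4 0 0 1 0))
              (line_mx (vec4 0 mu 0 1) (vec4 1 0 1 0))
   <-> (mu = - (3%:R)^-1 /\ (#|F| %% 12 = 11)%N)).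
Proof.
move=> q_odd q_mod3 mu_nsq.
have two0 := card_odd_two_neq0 q_odd.
have three0 := card_mod3_three_neq0 q_mod3.
have mu3E : 3%:R * mu + 1 = 0 <-> mu = - 3%:R^-1.
  split=> [mu3 | ->]; last by rewrite mulrN mulfV ?addNr.
  by apply: (mulfI three0); rewrite mulrN mulfV //; apply/eqP; rewrite -addr_eq0 mu3.
split=> [/(Lc_ell_same_orbit_necessary two0 three0) [/mu3E mu3 [s ss]] | [/mu3E mu3 q_mod12]].
  split=> //; have N1_nsq : nonsquare (-1 : F).
    apply: (nonsquareMsqr (y := s / 3%:R)) => z.
    by rewrite mulrACA ss mulrA mulfV // mul1r mulN1r -mu3.
  have : (#|F| %% 4 != 1)%N by apply/eqP => /square_N1/(_ N1_nsq).
  lia.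
have [r quad0] := exists_square_root_rho_quad q_mod12 mu3 mu_nsq.
have [d d3] := cube_root_exists (2%:R * (9%:R * r ^+ 2 - 1)) q_mod3.
exact (Lc_ell_same_orbit two0 three0 mu3 quad0 d3).
Qed.
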